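(* Let $\mathcal{P}'$ be a set of pairwise edge-intersecting paths in a Helly $B_k$-EPG representation of a graph $G$. Then the intersection of all paths of $\mathcal{P}'$ contains at least one relevant edge (of some path of the representation).
   Context: A grid is the set of integer points of the plane; a grid edge joins two grid points at distance $1$. A path in the grid is a sequence of distinct grid edges in which consecutive edges share exactly one grid point and non-consecutive edges share none; a bend is a pair of consecutive edges with different directions (horizontal/vertical), these being bend edges. The first and last edges of a path are its extremity edges; relevant edges of a path are its extremity and bend edges. An EPG representation of $G$ is a family $(P_v)_{v\in V(G)}$ of grid paths such that distinct $u,v$ are adjacent iff $P_u,P_v$ share a grid edge; it is $B_k$-EPG if every path has at most $k$ bends, and Helly if every subfamily of pairwise edge-intersecting paths has a grid edge common to all its members. *)

From mathcomp Require Import all_boot all_order all_algebra.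
Set Implicit Arguments. Unset Strict Implicit. Unset Printing Implicit Defensive.
Import GRing.Theory Num.Theory.
Local Open Scope ring_scope.

Definition gpoint := (int * int)%type.

(* A grid edge is encoded canonically by its lower/left endpoint and its
   direction: (p, true) is the horizontal edge joining p and p + (1,0),
   (p, false) is the vertical edge joining p and p + (0,1).  This is a
   bijection with the set of unordered pairs of grid points at distance 1. *)
Definition gedge := (gpoint * bool)%type.

Definition horizontal (e : gedge) : bool := e.2.

Definition ends (e : gedge) : seq gpoint :=
  let: ((x, y), h) := e in
  [:: (x, y); if h then (x + 1, y) else (x, y + 1)].

Definition nshared (e f : gedge) : nat :=
  size [seq q <- ends e | q \in ends f].

Definition is_gpath (p : seq gedge) : Prop :=
  [/\ p != [::], uniq p &
   forall i j : nat, (i < j < size p)%N ->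
     (j = i.+1 -> nshared (nth (0, 0, true) p i) (nth (0, 0, true) p j) = 1%N) /\
     ((i.+1 < j)%N -> nshared (nth (0, 0, true) p i) (nth (0, 0, true) p j) = 0%N)].

Definition bend_at (p : seq gedge) (i : nat) : bool :=
  (i.+1 < size p)%N &&
  (horizontal (nth (0, 0, true) p i) != horizontal (nth (0, 0, true) p i.+1)).

Definition nbends (p : seq gedge) : nat :=
  count (bend_at p) (iota 0 (size p).-1).

Definition relevant (p : seq gedge) (e : gedge) : Prop :=
  [\/ p != [::] /\ e = head (0, 0, true) p,
      p != [::] /\ e = last (0, 0, true) p
    | exists i : nat, bend_at p i /\
        (e = nth (0, 0, true) p i \/ e = nth (0, 0, true) p i.+1)].

Definition edge_intersect (p q : seq gedge) : Prop := exists e, e \in p /\ e \in q.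

Definition EPG_rep (V : finType) (adj : rel V) (P : V -> seq gedge) : Prop :=
  (forall v, is_gpath (P v)) /\
  (forall u v, u != v -> (adj u v <-> edge_intersect (P u) (P v))).

Definition Bk_EPG (k : nat) (V : finType) (adj : rel V) (P : V -> seq gedge) : Prop :=
  EPG_rep adj P /\ forall v, (nbends (P v) <= k)%N.

Definition Helly_family (V : finType) (P : V -> seq gedge) : Prop :=
  forall S : {set V},
    (forall u v, u \in S -> v \in S -> edge_intersect (P u) (P v)) ->
    exists e : gedge, forall v, v \in S -> e \in P v.

From mathcomp Require Import all_boot all_order all_algebra.
From mathcomp Require Import zify.
Set Implicit Arguments. Unset Strict Implicit.
Local Open Scope ring_scope.

(* Helly gives an edge common to all paths of S.  Walk along one path P v0 to
   the last edge a that is common to all of them.  If a is not relevant on P v0,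
   the next edge b of P v0 is collinear with a and adjacent to it, and b misses
   some P v.  But the only edges collinear and adjacent to a are its two
   translates, and if a were an inner non-bend edge of P v both would lie on
   P v; so a is an extremity or a bend edge of P v. *)

Definition gshift (e : gedge) (n : int) : gedge :=
  let: ((x, y), h) := e in (if h then (x + n, y) else (x, y + n), h).

Lemma nshared_sym (e f : gedge) : nshared e f = nshared f e.
Proof.
case: e f => [[x y] []] [[x' y'] []]; rewrite /nshared /= !inE !xpair_eqE;
by repeat (case: eqP => /= ?); lia.
Qed.

Lemma nshared_self (e : gedge) : nshared e e != 0%N.
Proof. by case: e => [[x y] h]; rewrite /nshared /= inE eqxx. Qed.

Lemma collinear_nshared1 (e f : gedge) :
  horizontal f = horizontal e -> nshared e f = 1%N ->
  f = gshift e (-1) \/ f = gshift e 1.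
Proof.
case: e f => [[x y] h] [[x' y'] h'] /= ->; case: h;
rewrite /nshared /= !inE !xpair_eqE; repeat (case: eqP => /= ?); move=> //= _;
first [ by left; congr (_, _, _); lia | by right; congr (_, _, _); lia | lia ].
Qed.

Lemma collinear_neighbour_cases (a b f1 f2 : gedge) :
  horizontal b = horizontal a -> horizontal f1 = horizontal a ->
  horizontal f2 = horizontal a ->
  nshared a b = 1%N -> nshared a f1 = 1%N -> nshared a f2 = 1%N ->
  f1 != f2 -> b = f1 \/ b = f2.
Proof.
move=> hb h1 h2 /(collinear_nshared1 hb) Eb /(collinear_nshared1 h1) E1.
move=> /(collinear_nshared1 h2) E2.
by case: Eb E1 E2 => -> [] -> [] ->; rewrite ?eqxx; auto.
Qed.

Local Notation edge0 := (0, 0, true).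
Local Notation nth_edge := (nth edge0).

Section GridPath.

Variable p : seq gedge.
Hypothesis p_path : is_gpath p.

Lemma gpath_nshared_next i : (i.+1 < size p)%N ->
  nshared (nth_edge p i) (nth_edge p i.+1) = 1%N.
Proof.
by case: p_path => _ _ /(_ i i.+1); rewrite ltnSn => /[apply] -[->].
Qed.

Lemma gpath_nshared_skip i : (i.+2 < size p)%N ->
  nshared (nth_edge p i) (nth_edge p i.+2) = 0%N.
Proof.
by case: p_path => _ _ /(_ i i.+2); rewrite ltnS leqnSn => /[apply] -[_ ->].
Qed.

End GridPath.

Lemma horizontal_nth_nobend (p : seq gedge) i : (i.+1 < size p)%N ->
  ~~ bend_at p i -> horizontal (nth_edge p i.+1) = horizontal (nth_edge p i).
Proof. by rewrite /bend_at => -> /negbNE/eqP. Qed.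

Lemma relevant_nth0 (p : seq gedge) : p != [::] -> relevant p (nth_edge p 0).
Proof. by move=> p0; rewrite nth0; apply: Or31. Qed.

Lemma relevant_nth_last (p : seq gedge) i : (i < size p <= i.+1)%N ->
  relevant p (nth_edge p i).
Proof.
case/andP=> ip pi; have -> : i = (size p).-1 by lia.
by rewrite nth_last; apply: Or32; split=> //; rewrite -size_eq0 -lt0n (leq_ltn_trans _ ip).
Qed.

Lemma relevant_bend (p : seq gedge) i : bend_at p i ->
  relevant p (nth_edge p i) /\ relevant p (nth_edge p i.+1).
Proof. by move=> b; split; apply: Or33; exists i; split; [|left| |right]. Qed.

Lemma relevant_of_collinear_neighbour_notin (q : seq gedge) (a b : gedge) :
  is_gpath q -> a \in q -> b \notin q ->
  horizontal b = horizontal a -> nshared a b = 1%N -> relevant q a.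
Proof.
move=> qpath aq bq hb ab; have [q0 _ _] := qpath.
have mq : (index a q < size q)%N by rewrite index_mem.
rewrite -(nth_index edge0 aq) in hb ab *.
case: (index a q) mq hb ab => [|m] mq hb ab; first exact: relevant_nth0.
have [m2|] := ltnP m.+2 (size q); last by move=> qm; apply: relevant_nth_last; lia.
case b1: (bend_at q m); first exact: (relevant_bend b1).2.
case b2: (bend_at q m.+1); first exact: (relevant_bend b2).1.
have f1_neq_f2 : nth_edge q m != nth_edge q m.+2.
  apply/eqP => E; have /eqP := gpath_nshared_skip qpath m2.
  by rewrite -E (negbTE (nshared_self _)).
have [] := collinear_neighbour_cases hb
  (esym (horizontal_nth_nobend (ltnW m2) (negbT b1)))
  (horizontal_nth_nobend m2 (negbT b2)) ab
  (etrans (nshared_sym _ _) (gpath_nshared_next qpath (ltnW m2)))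
  (gpath_nshared_next qpath m2) f1_neq_f2 => Eb.
- by rewrite Eb (mem_nth _ (ltnW mq)) in bq.
- by rewrite Eb (mem_nth _ m2) in bq.
Qed.

Lemma last_index_in_has (T : Type) (x0 : T) (A : pred T) (s : seq T) :
  has A s -> exists j, [/\ (j < size s)%N, A (nth x0 s j) &
                         (j.+1 < size s)%N -> ~~ A (nth x0 s j.+1)].
Proof.
case/(has_nthP x0)=> i si Ai.
have exA : exists j, (j < size s)%N && A (nth x0 s j) by exists i; rewrite si.
have leA j : (j < size s)%N && A (nth x0 s j) -> (j <= size s)%N.
  by case/andP=> /ltnW.
have [j /andP[js Aj] jmax] := ex_maxnP exA leA.
exists j; split=> // j1s; apply/negP=> Aj1.
by have := jmax j.+1; rewrite j1s Aj1 ltnn => /(_ isT).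
Qed.

Theorem corollary3p1 (k : nat) (V : finType) (adj : rel V)
    (Hsym : symmetric adj) (Hirr : irreflexive adj) (P : V -> seq gedge)
    (HB : Bk_EPG k adj P) (HH : Helly_family P)
    (S : {set V}) (HS0 : S != set0)
    (HS : forall u v, u \in S -> v \in S -> edge_intersect (P u) (P v)) :
  exists (w : V) (e : gedge), relevant (P w) e /\ forall v, v \in S -> e \in P v.
Proof.
have [[gpaths _] _] := HB.
pose common := [pred e | [forall (v | v \in S), e \in P v]].
have [v0 v0S] := set0Pn _ HS0.
have [e0 e0S] := HH S HS.
have has_common : has common (P v0).
  by apply/hasP; exists e0; [exact: e0S | exact/forall_inP].
have [j [jp /forall_inP aS bS]] := last_index_in_has edge0 has_common.
have [jlast|j1p] := leqP (size (P v0)) j.+1.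
  by exists v0, (nth_edge (P v0) j); split=> //; apply: relevant_nth_last; rewrite jp.
have [bend|straight] := boolP (bend_at (P v0) j).
  by exists v0, (nth_edge (P v0) j); split=> //; exact: (relevant_bend bend).1.
have /forall_inPn[v vS bv] := bS j1p.
exists v, (nth_edge (P v0) j); split=> //.
apply: relevant_of_collinear_neighbour_notin (gpaths v) (aS v vS) bv _ _.
- exact: horizontal_nth_nobend j1p straight.
- exact: (gpath_nshared_next (gpaths v0)).
Qed.
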